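(* Let $\mathbf{IL}\mathsf X$ be a Horn logic and let $T$ be an $\mathbf{IL}\mathsf X$-satisfiable $\mathbf{IL}\mathsf X$-tableau (for some finite set $\Gamma$ of formulas). Then for any tableau rule, the tableau $T'$ obtained from $T$ by an application of that rule is also $\mathbf{IL}\mathsf X$-satisfiable.
   Context: Formulas: built from a countable set $\mathsf{Prop}$ of propositional variables by $\neg$, $\to$, unary $\Box$ and binary $\rhd$. $\mathbf{IL}$ is the modal logic with axioms all instances of propositional tautologies and the schemes $\Box(A\to B)\to(\Box A\to\Box B)$, $\Box(\Box A\to A)\to\Box A$, $\Box(A\to B)\to A\rhd B$, $(A\rhd B)\wedge(B\rhd C)\to A\rhd C$, $(A\rhd C)\wedge(B\rhd C)\to A\vee B\rhd C$, $A\rhd B\to(\Diamond A\to\Diamond B)$, $\Diamond A\rhd A$ ($\Diamond=\neg\Box\neg$), rules modus ponens and necessitation. An $\mathbf{IL}$-frame is $\langle W,R,S\rangle$ with $W\neq\emptyset$, $R$ transitive and Noetherian (no infinite chains $x_0Rx_1Rx_2\cdots$), $S$ ternary, $yS_xz$ meaning $(x,y,z)\in S$, each $S_x$ a reflexive transitive relation on $\{y:xRy\}$, and $xRyRz\Rightarrow yS_xz$. A model adds a valuation $V$; forcing is standard for $\neg,\to$; $x\Vdash\Box A$ iff all $R$-successors force $A$; $x\Vdash A\rhd B$ iff for every $y$ with $xRy$ and $y\Vdash A$ there is $z$ with $yS_xz$, $z\Vdash B$; and for $w\in W$, $y\Vdash\Box_wA$ iff every $z$ with $yS_wz$ forces $A$.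 $\mathbf{IL}\mathsf X$ is $\mathbf{IL}$ plus axiom schemes $\mathsf X$; it is Horn if there is a set $\mathcal C_{\mathsf X}$ of strict universal Horn sentences $\forall\cdots\forall(\varphi_1\wedge\dots\wedge\varphi_n\to\psi)$ ($n\ge0$, atomic $\varphi_i,\psi$) in the language $\{R,S\}$ such that an $\mathbf{IL}$-frame validates all theorems of $\mathbf{IL}\mathsf X$ iff it satisfies $\mathcal C_{\mathsf X}$; $\mathbf{IL}\mathsf X$-frames/models are those satisfying $\mathcal C_{\mathsf X}$. Labels: $0$; $\sigma Rn$ for a label $\sigma$, $n\in\mathbb N$; $\sigma S_\rho n$ for labels $\sigma,\rho$ with $\rho$ a strict non-empty prefix of $\sigma$. Extended formulas also allow unary operators $\Box_\rho$, $\rho$ a label. Labelled formula: $\sigma::A$. For a set $\Lambda$ of labels, $\mathbf R^\Lambda,\mathbf S^\Lambda$ are the least relations on $\Lambda$ with: (1) $\sigma,\sigma Rn\in\Lambda\Rightarrow\sigma\mathbf R\,\sigma Rn$; (2) $\mathbf R$ transitive; (3) $\sigma,\rho,\sigma S_\rho n\in\Lambda\Rightarrow\sigma\mathbf S_\rho\,\sigma S_\rho n$; (4) $\sigma\mathbf R\tau\Rightarrow\tau\mathbf S_\sigma\tau$; (5) $\rho\mathbf R\sigma\mathbf R\tau\Rightarrow\sigma\mathbf S_\rho\tau$; (6) $\sigma\mathbf S_\rho\tau\mathbf S_\rho\upsilon\Rightarrow\sigma\mathbf S_\rho\upsilon$; (7) $\sigma\mathbf S_\rho\tau\Rightarrow\rho\mathbf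 R\sigma,\rho\mathbf R\tau$; (8) $\langle\Lambda,\mathbf R^\Lambda,\mathbf S^\Lambda\rangle\models\mathcal C_{\mathsf X}$ (where $\sigma\mathbf S_\rho\tau$ means $(\rho,\sigma,\tau)\in\mathbf S^\Lambda$). Tableau rules w.r.t. $\Lambda$ (antecedent $\Rightarrow$ succedents; ''$\mid$'' = branching): $\sigma::\neg\neg A\Rightarrow\sigma::A$; $\sigma::A\to B\Rightarrow\sigma::\neg A\mid\sigma::B$; $\sigma::\neg(A\to B)\Rightarrow\sigma::A,\sigma::\neg B$; $\sigma::\Box A\Rightarrow\tau::A$ when $\sigma\mathbf R\tau$; $\sigma::\Box_\rho A\Rightarrow\tau::A$ when $\sigma\mathbf S_\rho\tau$; $\sigma::A\rhd B\Rightarrow\tau::\neg A\mid\tau::\neg\Box_\sigma\neg B$ when $\sigma\mathbf R\tau$; $\sigma::\neg\Box A\Rightarrow\sigma Rn::\neg A,\sigma Rn::\Box A$ with $\sigma Rn\notin\Lambda$; $\sigma::\neg\Box_\rho A\Rightarrow\sigma S_\rho n::\neg A,\sigma S_\rho n::\Box A$ with $\sigma S_\rho n\notin\Lambda$; $\sigma::\neg(A\rhd B)\Rightarrow\sigma Rn::A,\sigma Rn::\Box_\sigma\neg B,\sigma Rn::\Box\neg A$ with $\sigma Rn\notin\Lambda$. $\mathbf{IL}\mathsf X$-tableau for finite $\Gamma$ (downward growing binary tree of labelled formulas), inductively: a single node $0::A$ with $A\in\Gamma$; extending any branch by $0::A$, $A\in\Gamma$; if $\mathcal B$ is a branch and some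 $\sigma::A$ on $\mathcal B$ is the antecedent of an instance of a rule w.r.t. $\mathrm{lab}(\mathcal B)$ (labels occurring on $\mathcal B$), extending $\mathcal B$ by the succedents (with branching). Satisfiability: a set $\mathcal X$ of labelled formulas is $\mathbf{IL}\mathsf X$-satisfiable if there are an $\mathbf{IL}\mathsf X$-model $M=\langle W,R,S,V\rangle$ and a map $I:\mathrm{lab}(\mathcal X)\to W$ such that (i) $\sigma\mathbf R\tau\Rightarrow I(\sigma)RI(\tau)$; (ii) $\sigma\mathbf S_\rho\tau\Rightarrow I(\sigma)S_{I(\rho)}I(\tau)$ (relations $\mathbf R^{\mathrm{lab}(\mathcal X)},\mathbf S^{\mathrm{lab}(\mathcal X)}$); (iii) $M,I(\sigma)\Vdash A$ for all $\sigma::A\in\mathcal X$, with $\Box_\rho$ interpreted as $\Box_{I(\rho)}$. A tableau is $\mathbf{IL}\mathsf X$-satisfiable if some branch of it is. *)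

From Stdlib Require Import List.
Import ListNotations.

(* L0 = "0";  LR s n = "s R n";  LS s r n = "s S_r n" *)
Inductive label : Type :=
| L0 : label
| LR : label -> nat -> label
| LS : label -> label -> nat -> label.

(* r is a strict (non-empty) prefix of s, prefixes taken at label boundaries *)
Inductive strict_prefix : label -> label -> Prop :=
| sp_R  : forall s n, strict_prefix s (LR s n)
| sp_Rt : forall r s n, strict_prefix r s -> strict_prefix r (LR s n)
| sp_S  : forall s q n, strict_prefix s (LS s q n)
| sp_St : forall r s q n, strict_prefix r s -> strict_prefix r (LS s q n).

Inductive is_label : label -> Prop :=
| il0 : is_label L0
| ilR : forall s n, is_label s -> is_label (LR s n)
| ilS : forall s r n, is_label s -> is_label r -> strict_prefix r s ->
          is_label (LS s r n).

Inductive form : Type :=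
| Var  : nat -> form
| Neg  : form -> form
| Imp  : form -> form -> form
| Box  : form -> form
| Rhd  : form -> form -> form
| BoxL : label -> form -> form.

Fixpoint pure (A : form) : Prop :=
  match A with
  | Var _ => True
  | Neg A => pure A
  | Imp A B => pure A /\ pure B
  | Box A => pure A
  | Rhd A B => pure A /\ pure B
  | BoxL _ _ => False
  end.

Definition And (A B : form) := Neg (Imp A (Neg B)).
Definition Or (A B : form) := Imp (Neg A) B.
Definition Dia (A : form) := Neg (Box (Neg A)).

Definition noetherian (W : Type) (R : W -> W -> Prop) : Prop :=
  ~ exists f : nat -> W, forall n, R (f n) (f (S n)).

(* S x y z  means  y S_x z *)
Definition il_frame (W : Type) (R : W -> W -> Prop) (S : W -> W -> W -> Prop)
  : Prop :=
  inhabited W /\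
  (forall x y z, R x y -> R y z -> R x z) /\
  noetherian W R /\
  (forall x y z, S x y z -> R x y /\ R x z) /\
  (forall x y, R x y -> S x y y) /\
  (forall x y z u, S x y z -> S x z u -> S x y u) /\
  (forall x y z, R x y -> R y z -> S x y z).

Fixpoint forces (W : Type) (R : W -> W -> Prop) (S : W -> W -> W -> Prop)
  (V : W -> nat -> Prop) (I : label -> W) (w : W) (A : form) : Prop :=
  match A with
  | Var p => V w p
  | Neg A => ~ forces W R S V I w A
  | Imp A B => forces W R S V I w A -> forces W R S V I w B
  | Box A => forall v, R w v -> forces W R S V I v A
  | Rhd A B => forall y, R w y -> forces W R S V I y A ->
                 exists z, S w y z /\ forces W R S V I z B
  | BoxL r A => forall z, S (I r) w z -> forces W R S V I z A
  end.

(* validity in a frame (for ordinary formulas I is irrelevant) *)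
Definition valid (W : Type) (R : W -> W -> Prop) (S : W -> W -> W -> Prop)
  (A : form) : Prop :=
  forall (V : W -> nat -> Prop) (I : label -> W) (w : W), forces W R S V I w A.

Fixpoint peval (v : form -> bool) (A : form) : bool :=
  match A with
  | Neg A => negb (peval v A)
  | Imp A B => implb (peval v A) (peval v B)
  | _ => v A
  end.

Definition tautology (A : form) : Prop := forall v, peval v A = true.

Fixpoint subst (s : nat -> form) (A : form) : form :=
  match A with
  | Var p => s p
  | Neg A => Neg (subst s A)
  | Imp A B => Imp (subst s A) (subst s B)
  | Box A => Box (subst s A)
  | Rhd A B => Rhd (subst s A) (subst s B)
  | BoxL r A => BoxL r (subst s A)
  end.

(* X : the set of additional axiom schemes (given by representative formulas;
   all substitution instances are axioms) *)
Inductive provable (X : form -> Prop) : form -> Prop :=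
| pr_taut : forall A, pure A -> tautology A -> provable X A
| pr_K : forall A B, pure A -> pure B ->
    provable X (Imp (Box (Imp A B)) (Imp (Box A) (Box B)))
| pr_L : forall A, pure A ->
    provable X (Imp (Box (Imp (Box A) A)) (Box A))
| pr_J1 : forall A B, pure A -> pure B ->
    provable X (Imp (Box (Imp A B)) (Rhd A B))
| pr_J2 : forall A B C, pure A -> pure B -> pure C ->
    provable X (Imp (And (Rhd A B) (Rhd B C)) (Rhd A C))
| pr_J3 : forall A B C, pure A -> pure B -> pure C ->
    provable X (Imp (And (Rhd A C) (Rhd B C)) (Rhd (Or A B) C))
| pr_J4 : forall A B, pure A -> pure B ->
    provable X (Imp (Rhd A B) (Imp (Dia A) (Dia B)))
| pr_J5 : forall A, pure A -> provable X (Rhd (Dia A) A)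
| pr_X : forall B s, X B -> (forall p, pure (s p)) -> provable X (subst s B)
| pr_MP : forall A B, provable X (Imp A B) -> provable X A -> provable X B
| pr_Nec : forall A, provable X A -> provable X (Box A).

(* first-order variables are naturals; HS x y z stands for  y S_x z *)
Inductive hatom : Type :=
| HR : nat -> nat -> hatom
| HS : nat -> nat -> nat -> hatom.

Record hsent : Type := mkH { hbody : list hatom; hhead : hatom }.

Definition hatom_sat (W : Type) (R : W -> W -> Prop) (S : W -> W -> W -> Prop)
  (g : nat -> W) (a : hatom) : Prop :=
  match a with
  | HR x y => R (g x) (g y)
  | HS x y z => S (g x) (g y) (g z)
  end.

Definition horn_sat (W : Type) (R : W -> W -> Prop) (S : W -> W -> W -> Prop)
  (C : hsent -> Prop) : Prop :=
  forall h, C h -> forall g : nat -> W,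
    (forall a, In a (hbody h) -> hatom_sat W R S g a) ->
    hatom_sat W R S g (hhead h).

(* IL X is Horn, witnessed by the set C of Horn sentences *)
Definition horn_for (X : form -> Prop) (C : hsent -> Prop) : Prop :=
  forall (W : Type) (R : W -> W -> Prop) (S : W -> W -> W -> Prop),
    il_frame W R S ->
    ((forall A, provable X A -> valid W R S A) <-> horn_sat W R S C).

Inductive gatom : Type :=
| GR : label -> label -> gatom
| GS : label -> label -> label -> gatom.     (* GS r s t : s S_r t *)

Definition ginst (g : nat -> label) (a : hatom) : gatom :=
  match a with
  | HR x y => GR (g x) (g y)
  | HS x y z => GS (g x) (g y) (g z)
  end.

(* least relations on Lambda satisfying (1)-(8) *)
Inductive clos (C : hsent -> Prop) (L : label -> Prop) : gatom -> Prop :=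
| cl1 : forall s n, L s -> L (LR s n) -> clos C L (GR s (LR s n))
| cl2 : forall s t u, clos C L (GR s t) -> clos C L (GR t u) -> clos C L (GR s u)
| cl3 : forall s r n, L s -> L r -> L (LS s r n) ->
    clos C L (GS r s (LS s r n))
| cl4 : forall s t, clos C L (GR s t) -> clos C L (GS s t t)
| cl5 : forall r s t, clos C L (GR r s) -> clos C L (GR s t) -> clos C L (GS r s t)
| cl6 : forall r s t u, clos C L (GS r s t) -> clos C L (GS r t u) ->
    clos C L (GS r s u)
| cl7a : forall r s t, clos C L (GS r s t) -> clos C L (GR r s)
| cl7b : forall r s t, clos C L (GS r s t) -> clos C L (GR r t)
| cl8 : forall h (g : nat -> label), C h -> (forall v, L (g v)) ->
    (forall a, In a (hbody h) -> clos C L (ginst g a)) ->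
    clos C L (ginst g (hhead h)).

Definition Rl (C : hsent -> Prop) (L : label -> Prop) (s t : label) : Prop :=
  clos C L (GR s t).
(* Sl C L r s t : s S_r t *)
Definition Sl (C : hsent -> Prop) (L : label -> Prop) (r s t : label) : Prop :=
  clos C L (GS r s t).

Definition lform : Type := (label * form)%type.   (* (s, A) is  s :: A *)

Definition lab (Xs : list lform) (s : label) : Prop :=
  exists A, In (s, A) Xs.

Definition lsat (C : hsent -> Prop) (Xs : list lform) : Prop :=
  exists (W : Type) (R : W -> W -> Prop) (S : W -> W -> W -> Prop)
         (V : W -> nat -> Prop) (I : label -> W),
    il_frame W R S /\ horn_sat W R S C /\
    (forall s t, Rl C (lab Xs) s t -> R (I s) (I t)) /\
    (forall r s t, Sl C (lab Xs) r s t -> S (I r) (I s) (I t)) /\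
    (forall s A, In (s, A) Xs -> forces W R S V I (I s) A).

Inductive tree : Type :=
| T0 : lform -> tree
| T1 : lform -> tree -> tree
| T2 : lform -> tree -> tree -> tree.

Inductive branch : tree -> list lform -> Prop :=
| br0 : forall x, branch (T0 x) [x]
| br1 : forall x t B, branch t B -> branch (T1 x t) (x :: B)
| br2l : forall x t1 t2 B, branch t1 B -> branch (T2 x t1 t2) (x :: B)
| br2r : forall x t1 t2 B, branch t2 B -> branch (T2 x t1 t2) (x :: B).

(* succedents: linear (added in sequence) or branching *)
Inductive succ : Type :=
| Lin : list lform -> succ
| Br : lform -> lform -> succ.

Fixpoint chain (x : lform) (l : list lform) : tree :=
  match l with
  | [] => T0 x
  | y :: l' => T1 x (chain y l')
  end.

Definition attach (x : lform) (s : succ) : tree :=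
  match s with
  | Lin l => chain x l
  | Br a b => T2 x (T0 a) (T0 b)
  end.

Inductive extend : tree -> list lform -> succ -> tree -> Prop :=
| ex0 : forall x s, extend (T0 x) [x] s (attach x s)
| ex1 : forall x t B s t', extend t B s t' -> extend (T1 x t) (x :: B) s (T1 x t')
| ex2l : forall x t1 t2 B s t1', extend t1 B s t1' ->
    extend (T2 x t1 t2) (x :: B) s (T2 x t1' t2)
| ex2r : forall x t1 t2 B s t2', extend t2 B s t2' ->
    extend (T2 x t1 t2) (x :: B) s (T2 x t1 t2').

Inductive rule_inst (C : hsent -> Prop) (L : label -> Prop) : lform -> succ -> Prop :=
| r_negneg : forall s A, rule_inst C L (s, Neg (Neg A)) (Lin [(s, A)])
| r_imp : forall s A B, rule_inst C L (s, Imp A B) (Br (s, Neg A) (s, B))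
| r_negimp : forall s A B,
    rule_inst C L (s, Neg (Imp A B)) (Lin [(s, A); (s, Neg B)])
| r_box : forall s t A, Rl C L s t -> rule_inst C L (s, Box A) (Lin [(t, A)])
| r_boxl : forall s r t A, Sl C L r s t ->
    rule_inst C L (s, BoxL r A) (Lin [(t, A)])
| r_rhd : forall s t A B, Rl C L s t ->
    rule_inst C L (s, Rhd A B) (Br (t, Neg A) (t, Neg (BoxL s (Neg B))))
| r_negbox : forall s n A, ~ L (LR s n) ->
    rule_inst C L (s, Neg (Box A)) (Lin [(LR s n, Neg A); (LR s n, Box A)])
| r_negboxl : forall s r n A, ~ L (LS s r n) -> is_label (LS s r n) ->
    rule_inst C L (s, Neg (BoxL r A))
      (Lin [(LS s r n, Neg A); (LS s r n, Box A)])
| r_negrhd : forall s n A B, ~ L (LR s n) ->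
    rule_inst C L (s, Neg (Rhd A B))
      (Lin [(LR s n, A); (LR s n, BoxL s (Neg B)); (LR s n, Box (Neg A))]).

Definition rule_step (C : hsent -> Prop) (T T' : tree) : Prop :=
  exists (B : list lform) (a : lform) (s : succ),
    branch T B /\ In a B /\ rule_inst C (lab B) a s /\ extend T B s T'.

Inductive is_tableau (C : hsent -> Prop) (Gamma : list form) : tree -> Prop :=
| tab_init : forall A, In A Gamma -> is_tableau C Gamma (T0 (L0, A))
| tab_gamma : forall T B A T', is_tableau C Gamma T -> In A Gamma ->
    branch T B -> extend T B (Lin [(L0, A)]) T' -> is_tableau C Gamma T'
| tab_rule : forall T T', is_tableau C Gamma T -> rule_step C T T' ->
    is_tableau C Gamma T'.

Definition tab_sat (C : hsent -> Prop) (T : tree) : Prop :=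
  exists B, branch T B /\ lsat C B.

From Stdlib Require Import List Classical ClassicalEpsilon.
Import ListNotations.

(* Take a model I of the branch to which the rule is applied (all other
   branches are unchanged). For a rule that introduces no new label, one of
   its alternatives is true under the same I. For a rule introducing a fresh
   label l, interpret l as an R-maximal world among the counterexamples to the
   negated formula; one exists since R is Noetherian, and maximality (with
   transitivity of R and the frame conditions on S) makes the Box-conclusions
   of the rule true there. The relations R^Λ, S^Λ on the extended label set
   are the least ones closed under (1)-(8), and the frame satisfies all these
   closure conditions, so they are again mapped into R and S. Both steps need
   a syntactic invariant of tableau branches: the labels of a branch are
   closed under taking the labels they are built from, and every Box_ρ
   occurring on a branch has ρ on that branch; so a fresh label is never
   mentioned by the old formulas, whose truth is unaffected. *)

(** * Branches of tableaux *)

Definition alternatives (s : succ) : list (list lform) :=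
  match s with
  | Lin l => [l]
  | Br a b => [[a]; [b]]
  end.

Lemma branch_chain l x : branch (chain x l) (x :: l).
Proof. revert x; induction l; simpl; constructor; auto. Qed.

Lemma branch_chain_inv l x B : branch (chain x l) B -> B = x :: l.
Proof.
  revert x B; induction l as [|y l IH]; simpl; intros x B H; inversion H; subst.
  - reflexivity.
  - f_equal; auto.
Qed.

Lemma extend_branch_new T B s T' :
  extend T B s T' -> forall N, In N (alternatives s) -> branch T' (B ++ N).
Proof.
  induction 1; intros N HN; simpl.
  - destruct s as [l|a b]; simpl in HN.
    + destruct HN as [<-|[]]; apply branch_chain.
    + destruct HN as [<-|[<-|[]]]; [apply br2l | apply br2r]; constructor.
  - constructor; auto.
  - apply br2l; auto.
  - apply br2r; auto.
Qed.

Lemma extend_branch_old T B s T' :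
  extend T B s T' -> forall B0, branch T B0 -> B0 <> B -> branch T' B0.
Proof.
  induction 1; intros B0 Hb Hne; inversion Hb; subst.
  - congruence.
  - constructor; apply IHextend; congruence.
  - apply br2l; apply IHextend; congruence.
  - apply br2r; assumption.
  - apply br2l; assumption.
  - apply br2r; apply IHextend; congruence.
Qed.

Lemma extend_branch_inv T B s T' :
  extend T B s T' -> forall B0, branch T' B0 ->
  branch T B0 \/ exists N, In N (alternatives s) /\ B0 = B ++ N.
Proof.
  induction 1; intros B0 Hb.
  - right; destruct s as [l|a b]; simpl in Hb.
    + exists l; split; [now left | now apply branch_chain_inv].
    + inversion Hb as [| |? ? ? ? Hl|? ? ? ? Hr]; subst.
      * inversion Hl; subst; exists [a]; simpl; auto.
      * inversion Hr; subst; exists [b]; simpl; auto.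
  - inversion Hb as [|? ? ? Ht| |]; subst.
    destruct (IHextend _ Ht) as [?|[N [HN ->]]];
      [left; constructor | right; exists N]; auto.
  - inversion Hb as [| |? ? ? ? Ht|]; subst.
    + destruct (IHextend _ Ht) as [?|[N [HN ->]]];
        [left; apply br2l | right; exists N]; auto.
    + left; apply br2r; assumption.
  - inversion Hb as [| | |? ? ? ? Ht]; subst.
    + left; apply br2l; assumption.
    + destruct (IHextend _ Ht) as [?|[N [HN ->]]];
        [left; apply br2r | right; exists N]; auto.
Qed.

Lemma lab_app B N x : lab (B ++ N) x <-> lab B x \/ lab N x.
Proof.
  unfold lab; split.
  - intros [A H]; apply in_app_or in H as [H|H]; eauto.
  - intros [[A H]|[A H]]; exists A; apply in_or_app; auto.
Qed.

(** * The relations R^Λ and S^Λ *)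

Lemma clos_mono C (L L' : label -> Prop) :
  (forall x, L x -> L' x) -> forall a, clos C L a -> clos C L' a.
Proof.
  intros HL a H; induction H.
  - apply cl1; auto.
  - eapply cl2; eauto.
  - apply cl3; auto.
  - apply cl4; auto.
  - apply cl5; auto.
  - eapply cl6; eauto.
  - eapply cl7a; eauto.
  - eapply cl7b; eauto.
  - apply cl8; auto.
Qed.

Definition gatom_in (L : label -> Prop) (a : gatom) : Prop :=
  match a with
  | GR s t => L s /\ L t
  | GS r s t => L r /\ L s /\ L t
  end.

Lemma clos_labels C L a : clos C L a -> gatom_in L a.
Proof.
  induction 1; simpl in *; try tauto.
  destruct (hhead h); simpl; auto.
Qed.

Lemma Rl_labels C L s t : Rl C L s t -> L t.
Proof. intros H; apply clos_labels in H; apply H. Qed.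

Lemma Sl_labels C L r s t : Sl C L r s t -> L t.
Proof. intros H; apply clos_labels in H; apply H. Qed.

(** * The branch invariant *)

Fixpoint mentions (A : form) (r : label) : Prop :=
  match A with
  | Var _ => False
  | Neg A | Box A => mentions A r
  | Imp A B | Rhd A B => mentions A r \/ mentions B r
  | BoxL q A => q = r \/ mentions A r
  end.

Lemma pure_mentions A r : pure A -> ~ mentions A r.
Proof. induction A; simpl; tauto. Qed.

Definition parents_in (L : label -> Prop) (x : label) : Prop :=
  match x with
  | L0 => True
  | LR s _ => L s
  | LS s r _ => L s /\ L r
  end.

Definition parent_closed (L : label -> Prop) : Prop :=
  forall x, L x -> parents_in L x.

Definition mentions_within (L : label -> Prop) (N : list lform) : Prop :=
  forall l A, In (l, A) N -> forall r, mentions A r -> L r.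

Definition wf_branch (B : list lform) : Prop :=
  parent_closed (lab B) /\ mentions_within (lab B) B.

Lemma strict_prefix_closed L r s :
  strict_prefix r s -> parent_closed L -> L s -> L r.
Proof.
  induction 1; intros Hpc Hs; apply Hpc in Hs; simpl in Hs; intuition.
Qed.

Lemma wf_branch_app B N :
  wf_branch B ->
  (forall x, lab N x -> lab B x \/ parents_in (lab B) x) ->
  mentions_within (lab B) N ->
  wf_branch (B ++ N).
Proof.
  intros [Hpc Hment] HN HNment; split.
  - intros x Hx.
    assert (Hpar : parents_in (lab B) x).
    { apply lab_app in Hx as [Hx|Hx]; [auto | destruct (HN x Hx); auto]. }
    destruct x; simpl in *; intuition; apply lab_app; auto.
  - intros l A Hin r Hr; apply lab_app; left.
    apply in_app_or in Hin as [Hin|Hin]; eauto.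
Qed.

Lemma wf_branch_root B A : wf_branch B -> pure A -> wf_branch (B ++ [(L0, A)]).
Proof.
  intros HB HA; apply wf_branch_app; auto.
  - intros x [A0 [H|[]]]; injection H as <- _; right; exact I.
  - intros l A0 [H|[]] r Hr; injection H as _ <-.
    exfalso; exact (pure_mentions A r HA Hr).
Qed.

Lemma rule_labels C B a s N :
  wf_branch B -> In a B -> rule_inst C (lab B) a s -> In N (alternatives s) ->
  forall x, lab N x -> lab B x \/ parents_in (lab B) x.
Proof.
  intros [Hpc _] Ha Hr HN x [A Hx].
  assert (Hs0 : lab B (fst a)) by (exists (snd a); destruct a; exact Ha).
  destruct Hr; simpl in HN, Hs0;
    repeat destruct HN as [<-|HN]; try contradiction;
    repeat destruct Hx as [Hx|Hx]; try contradiction;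
    injection Hx as <- _.
  all: try (left; assumption).
  all: try (left; eapply Rl_labels; eassumption).
  all: try (left; eapply Sl_labels; eassumption).
  all: right; simpl; auto.
  all: match goal with H : is_label _ |- _ => inversion H; subst end;
    split; [assumption | eapply strict_prefix_closed; eauto].
Qed.

Lemma rule_mentions C B a s N :
  wf_branch B -> In a B -> rule_inst C (lab B) a s -> In N (alternatives s) ->
  mentions_within (lab B) N.
Proof.
  intros [_ Hment] Ha Hr HN l A Hx r Hr0.
  destruct Hr; simpl in HN;
    repeat destruct HN as [<-|HN]; try contradiction;
    repeat destruct Hx as [Hx|Hx]; try contradiction;
    injection Hx as _ <-; simpl in Hr0.
  all: first
    [ apply (Hment _ _ Ha); simpl; tauto
    | destruct Hr0 as [<-|Hr0];
      [ eexists; exact Ha | apply (Hment _ _ Ha); simpl; tauto ] ].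
Qed.

Lemma wf_branch_rule C B a s N :
  wf_branch B -> In a B -> rule_inst C (lab B) a s -> In N (alternatives s) ->
  wf_branch (B ++ N).
Proof.
  intros HB Ha Hr HN; apply wf_branch_app; auto.
  - eapply rule_labels; eauto.
  - eapply rule_mentions; eauto.
Qed.

Lemma tableau_wf_branch C Gamma T :
  (forall A, In A Gamma -> pure A) ->
  is_tableau C Gamma T -> forall B, branch T B -> wf_branch B.
Proof.
  intros HGamma H; induction H as [A HA|T B A T' HT IH HA HB Hext|T T' HT IH Hstep];
    intros B0 Hb.
  - inversion Hb; subst.
    apply (wf_branch_root []); auto.
    split; [intros x [A0 []] | intros l A0 []].
  - destruct (extend_branch_inv _ _ _ _ Hext _ Hb) as [Hb'|[N [HN ->]]]; auto.
    destruct HN as [<-|[]]; apply wf_branch_root; auto.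
  - destruct Hstep as [B [a [s [HB [Ha [Hr Hext]]]]]].
    destruct (extend_branch_inv _ _ _ _ Hext _ Hb) as [Hb'|[N [HN ->]]]; auto.
    eapply wf_branch_rule; eauto.
Qed.

(** * Models *)

Lemma forces_ext W R S V A (I I' : label -> W) :
  (forall r, mentions A r -> I r = I' r) ->
  forall w, forces W R S V I w A <-> forces W R S V I' w A.
Proof.
  revert I I'; induction A as [p|A IH|A IHA B IHB|A IH|A IHA B IHB|q A IH];
    intros I I' HI w; simpl in *.
  - tauto.
  - rewrite (IH I I' HI w); tauto.
  - rewrite (IHA I I' (fun r h => HI r (or_introl h)) w),
      (IHB I I' (fun r h => HI r (or_intror h)) w); tauto.
  - split; intros Hf v Hv; apply (IH I I' HI v); auto.
  - split; intros Hf y Hy HA;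
      [ apply <- (IHA I I' (fun r h => HI r (or_introl h)) y) in HA
      | apply (IHA I I' (fun r h => HI r (or_introl h)) y) in HA ];
      destruct (Hf y Hy HA) as [z [Hz HB]]; exists z; split; auto;
      apply (IHB I I' (fun r h => HI r (or_intror h)) z); auto.
  - rewrite (HI q (or_introl eq_refl)).
    split; intros Hf z Hz; apply (IH I I' (fun r h => HI r (or_intror h)) z); auto.
Qed.

Lemma noetherian_maximal W (R : W -> W -> Prop) (P : W -> Prop) x :
  noetherian W R -> P x -> exists y, P y /\ forall z, R y z -> ~ P z.
Proof.
  intros HR Hx; apply NNPP; intro Hnone.
  assert (Hstep : forall y : {y | P y}, exists z : {z | P z},
             R (proj1_sig y) (proj1_sig z)).
  { intros [y Hy]; apply NNPP; intro Hn; apply Hnone; exists y; split; auto.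
    intros z Hz Pz; apply Hn; exists (exist _ z Pz); auto. }
  set (next y := proj1_sig (constructive_indefinite_description _ (Hstep y))).
  apply HR; exists (fun n => proj1_sig (Nat.iter n next (exist _ x Hx))).
  intro n; exact (proj2_sig (constructive_indefinite_description _ (Hstep _))).
Qed.

Definition label_eq_dec (x y : label) : {x = y} + {x <> y}.
Proof. decide equality; decide equality. Defined.

Definition upd {W} (I : label -> W) (l : label) (w : W) : label -> W :=
  fun x => if label_eq_dec x l then w else I x.

Lemma upd_same {W} (I : label -> W) l w : upd I l w l = w.
Proof. unfold upd; destruct (label_eq_dec l l); congruence. Qed.

Lemma upd_other {W} (I : label -> W) l w x : x <> l -> upd I l w x = I x.
Proof. unfold upd; destruct (label_eq_dec x l); congruence. Qed.

Section Model.

Variables (W : Type) (R : W -> W -> Prop) (S : W -> W -> W -> Prop)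
  (V : W -> nat -> Prop) (C : hsent -> Prop).
Hypothesis frame : il_frame W R S.
Hypothesis horn : horn_sat W R S C.

Definition gatom_holds (I : label -> W) (a : gatom) : Prop :=
  match a with
  | GR s t => R (I s) (I t)
  | GS r s t => S (I r) (I s) (I t)
  end.

Definition respects (L : label -> Prop) (I : label -> W) : Prop :=
  forall a, clos C L a -> gatom_holds I a.

(* the conditions (1) and (3) for the fresh label [l] *)
Definition admissible (L : label -> Prop) (I : label -> W) (l : label) (w : W)
  : Prop :=
  match l with
  | L0 => False
  | LR p _ => L p /\ R (I p) w
  | LS p q _ => L p /\ L q /\ S (I q) (I p) w
  end.

Lemma respects_upd L I l w :
  parent_closed L -> ~ L l -> respects L I -> admissible L I l w ->
  respects (fun x => L x \/ x = l) (upd I l w).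
Proof.
  destruct frame as (_ & Htrans & _ & HSR & HRS & HStrans & HRRS).
  intros Hpc Hl Hold Hadm a H.
  assert (Hne : forall x, L x -> x <> l) by (intros x Hx ->; contradiction).
  induction H as [s n Hs Hsn| | s r n Hs Hr Hsrn| | | | | |h g Hh Hg Hbody IH];
    simpl in *.
  - destruct Hsn as [Hsn | <-].
    + pose proof (Hpc _ Hsn) as Hs'; simpl in Hs'.
      rewrite !upd_other by (apply Hne; assumption).
      apply (Hold (GR s (LR s n))), cl1; assumption.
    + destruct Hadm as [Hs' Hw].
      rewrite upd_same, upd_other by (apply Hne; assumption); assumption.
  - eauto.
  - destruct Hsrn as [Hsrn | <-].
    + pose proof (Hpc _ Hsrn) as [Hs' Hr']; simpl in Hs'.
      rewrite !upd_other by (apply Hne; assumption).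
      apply (Hold (GS r s (LS s r n))), cl3; assumption.
    + destruct Hadm as (Hs' & Hr' & Hw).
      rewrite upd_same, !upd_other by (apply Hne; assumption); assumption.
  - auto.
  - auto.
  - eauto.
  - apply (HSR _ _ _ IHclos).
  - apply (HSR _ _ _ IHclos).
  - assert (Hinst : forall a, hatom_sat W R S (fun v => upd I l w (g v)) a
                              = gatom_holds (upd I l w) (ginst g a))
      by (destruct a; reflexivity).
    rewrite <- Hinst; apply horn; auto.
    intros a Ha; rewrite Hinst; auto.
Qed.

Lemma forces_upd_fresh (L : label -> Prop) I l w A v :
  ~ L l -> (forall r, mentions A r -> L r) ->
  forces W R S V (upd I l w) v A <-> forces W R S V I v A.
Proof.
  intros Hl HA; apply forces_ext; intros r Hr.
  apply upd_other; intros ->; exact (Hl (HA _ Hr)).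
Qed.

Section Branch.

Variables (B : list lform) (I : label -> W).
Hypothesis HwfB : wf_branch B.
Hypothesis HrespB : respects (lab B) I.
Hypothesis HforcedB : forall s A, In (s, A) B -> forces W R S V I (I s) A.

Lemma lab_extend l As x : lab (B ++ map (pair l) As) x -> lab B x \/ x = l.
Proof.
  intros Hx; apply lab_app in Hx as [Hx|[A Hx]]; [now left | right].
  apply in_map_iff in Hx as [A' [HA' _]]; congruence.
Qed.

Lemma lsat_extend_old l As :
  lab B l -> (forall A, In A As -> forces W R S V I (I l) A) ->
  lsat C (B ++ map (pair l) As).
Proof.
  intros Hl HAs.
  assert (Hlab : forall x, lab (B ++ map (pair l) As) x -> lab B x)
    by (intros x Hx; destruct (lab_extend l As x Hx) as [? | ->]; auto).
  exists W, R, S, V, I.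
  split; [exact frame|]; split; [exact horn|]; split; [|split].
  - intros s t H; apply (HrespB (GR s t)); eapply clos_mono; eauto.
  - intros r s t H; apply (HrespB (GS r s t)); eapply clos_mono; eauto.
  - intros s A H; apply in_app_or in H as [H|H]; auto.
    apply in_map_iff in H as [A' [HA' HA'in]]; injection HA' as <- <-; auto.
Qed.

Lemma lsat_extend_fresh l w As :
  ~ lab B l -> admissible (lab B) I l w ->
  mentions_within (lab B) (map (pair l) As) ->
  (forall A, In A As -> forces W R S V I w A) ->
  lsat C (B ++ map (pair l) As).
Proof.
  intros Hl Hadm Hment HAs.
  destruct HwfB as [Hpc HmentB].
  pose proof (respects_upd _ _ _ _ Hpc Hl HrespB Hadm) as Hresp.
  exists W, R, S, V, (upd I l w).
  split; [exact frame|]; split; [exact horn|]; split; [|split].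
  - intros s t H; apply (Hresp (GR s t)); eapply clos_mono; [|exact H].
    apply lab_extend.
  - intros r s t H; apply (Hresp (GS r s t)); eapply clos_mono; [|exact H].
    apply lab_extend.
  - intros s A H; apply in_app_or in H as [H|H].
    + assert (Hs : lab B s) by (exists A; exact H).
      rewrite upd_other by (intros ->; contradiction).
      apply (forces_upd_fresh (lab B)); eauto.
    + apply in_map_iff in H as [A' [HA' HA'in]]; injection HA' as <- <-.
      rewrite upd_same; apply (forces_upd_fresh (lab B)); auto.
      apply (Hment l A'); apply in_map; assumption.
Qed.

Lemma negbox_sat s n A :
  In (s, Neg (Box A)) B -> ~ lab B (LR s n) ->
  mentions_within (lab B) [(LR s n, Neg A); (LR s n, Box A)] ->
  lsat C (B ++ [(LR s n, Neg A); (LR s n, Box A)]).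
Proof.
  destruct frame as (_ & Htrans & Hno & _).
  intros Ha Hfresh Hment.
  pose proof (HforcedB _ _ Ha) as Hf; simpl in Hf.
  assert (Hex : exists v, R (I s) v /\ ~ forces W R S V I v A).
  { apply NNPP; intro Hc; apply Hf; intros v Hv.
    apply NNPP; intro HvA; apply Hc; eauto. }
  destruct Hex as [v Hv].
  destruct (noetherian_maximal W R (fun v => R (I s) v /\ ~ forces W R S V I v A)
              v Hno Hv) as [y [[Hy HyA] Hmax]].
  apply (lsat_extend_fresh (LR s n) y [Neg A; Box A]); auto.
  - split; [exists (Neg (Box A)); exact Ha | exact Hy].
  - intros A0 [<-|[<-|[]]]; simpl; auto.
    intros z Hz; apply NNPP; intro HzA; apply (Hmax z Hz); eauto.
Qed.

Lemma negboxl_sat s r n A :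
  In (s, Neg (BoxL r A)) B -> ~ lab B (LS s r n) -> is_label (LS s r n) ->
  mentions_within (lab B) [(LS s r n, Neg A); (LS s r n, Box A)] ->
  lsat C (B ++ [(LS s r n, Neg A); (LS s r n, Box A)]).
Proof.
  destruct frame as (_ & _ & Hno & HSR & _ & HStrans & HRRS).
  intros Ha Hfresh Hil Hment.
  pose proof (HforcedB _ _ Ha) as Hf; simpl in Hf.
  assert (Hs : lab B s) by (exists (Neg (BoxL r A)); exact Ha).
  assert (Hr : lab B r).
  { inversion Hil; subst; eapply strict_prefix_closed; eauto; apply HwfB. }
  assert (Hex : exists v, S (I r) (I s) v /\ ~ forces W R S V I v A).
  { apply NNPP; intro Hc; apply Hf; intros v Hv.
    apply NNPP; intro HvA; apply Hc; eauto. }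
  destruct Hex as [v Hv].
  destruct (noetherian_maximal W R
              (fun v => S (I r) (I s) v /\ ~ forces W R S V I v A) v Hno Hv)
    as [y [[Hy HyA] Hmax]].
  apply (lsat_extend_fresh (LS s r n) y [Neg A; Box A]); auto.
  - simpl; auto.
  - intros A0 [<-|[<-|[]]]; simpl; auto.
    intros z Hz; apply NNPP; intro HzA; apply (Hmax z Hz); split; auto.
    (* from s S_r y and r R y R z we get s S_r z *)
    eapply HStrans; [exact Hy | apply HRRS; auto; apply (HSR _ _ _ Hy)].
Qed.

Lemma negrhd_sat s n A B0 :
  In (s, Neg (Rhd A B0)) B -> ~ lab B (LR s n) ->
  mentions_within (lab B)
    [(LR s n, A); (LR s n, BoxL s (Neg B0)); (LR s n, Box (Neg A))] ->
  lsat C (B ++ [(LR s n, A); (LR s n, BoxL s (Neg B0)); (LR s n, Box (Neg A))]).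
Proof.
  destruct frame as (_ & Htrans & Hno & _ & _ & HStrans & HRRS).
  intros Ha Hfresh Hment.
  pose proof (HforcedB _ _ Ha) as Hf; simpl in Hf.
  assert (Hs : lab B s) by (exists (Neg (Rhd A B0)); exact Ha).
  set (P v := R (I s) v /\ forces W R S V I v A /\
              forall z, S (I s) v z -> ~ forces W R S V I z B0).
  assert (Hex : exists v, P v).
  { apply NNPP; intro Hc; apply Hf; intros v Hv HvA.
    apply NNPP; intro Hv'; apply Hc; exists v; repeat split; auto.
    intros z Hz HzB; apply Hv'; eauto. }
  destruct Hex as [v Hv].
  destruct (noetherian_maximal W R P v Hno Hv) as [y [(Hy & HyA & HyB) Hmax]].
  apply (lsat_extend_fresh (LR s n) y [A; BoxL s (Neg B0); Box (Neg A)]); auto.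
  - split; assumption.
  - intros A0 [<-|[<-|[<-|[]]]]; simpl; auto.
    intros z Hz HzA; apply (Hmax z Hz); split; [eauto | split; auto].
    intros u Hu; apply HyB; eapply HStrans; [apply HRRS; eauto | exact Hu].
Qed.

Lemma rule_sat a s :
  In a B -> rule_inst C (lab B) a s ->
  exists N, In N (alternatives s) /\ lsat C (B ++ N).
Proof.
  intros Ha Hr.
  pose proof (fun N => rule_mentions C B a s N HwfB Ha Hr) as Hment.
  assert (Hs : lab B (fst a)) by (exists (snd a); destruct a; exact Ha).
  destruct Hr as [s0 A|s0 A B0|s0 A B0|s0 t A Hst|s0 r t A Hst|s0 t A B0 Hst
                 |s0 n A Hn|s0 r n A Hn Hil|s0 n A B0 Hn];
    pose proof (HforcedB _ _ Ha) as Hf; simpl in Hf, Hs, Hment.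
  - exists [(s0, A)]; split; [now left|].
    apply (lsat_extend_old s0 [A]); auto.
    intros A0 [<-|[]]; apply NNPP; exact Hf.
  - destruct (classic (forces W R S V I (I s0) A)) as [HA|HA].
    + exists [(s0, B0)]; split; [now right; left|].
      apply (lsat_extend_old s0 [B0]); auto.
      intros A0 [<-|[]]; auto.
    + exists [(s0, Neg A)]; split; [now left|].
      apply (lsat_extend_old s0 [Neg A]); auto.
      intros A0 [<-|[]]; auto.
  - exists [(s0, A); (s0, Neg B0)]; split; [now left|].
    apply (lsat_extend_old s0 [A; Neg B0]); auto.
    intros A0 [<-|[<-|[]]]; simpl; [apply NNPP|]; tauto.
  - exists [(t, A)]; split; [now left|].
    apply (lsat_extend_old t [A]); [eapply Rl_labels; eauto|].
    intros A0 [<-|[]]; apply Hf, (HrespB (GR s0 t)), Hst.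
  - exists [(t, A)]; split; [now left|].
    apply (lsat_extend_old t [A]); [eapply Sl_labels; eauto|].
    intros A0 [<-|[]]; apply Hf, (HrespB (GS r s0 t)), Hst.
  - destruct (classic (forces W R S V I (I t) A)) as [HA|HA].
    + exists [(t, Neg (BoxL s0 (Neg B0)))]; split; [now right; left|].
      apply (lsat_extend_old t [Neg (BoxL s0 (Neg B0))]);
        [eapply Rl_labels; eauto|].
      intros A0 [<-|[]]; simpl; intro Hc.
      destruct (Hf (I t) (HrespB (GR s0 t) Hst) HA) as [z [Hz HzB]].
      exact (Hc z Hz HzB).
    + exists [(t, Neg A)]; split; [now left|].
      apply (lsat_extend_old t [Neg A]); [eapply Rl_labels; eauto|].
      intros A0 [<-|[]]; auto.
  - eexists; split; [now left | apply negbox_sat; auto].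
  - eexists; split; [now left | apply negboxl_sat; auto].
  - eexists; split; [now left | apply negrhd_sat; auto].
Qed.

End Branch.

End Model.

Lemma lsat_rule_step C B a s :
  lsat C B -> wf_branch B -> In a B -> rule_inst C (lab B) a s ->
  exists N, In N (alternatives s) /\ lsat C (B ++ N).
Proof.
  intros (W & R & S & V & I & Hframe & Hhorn & HR & HS & Hforced) HB.
  apply (rule_sat W R S V C Hframe Hhorn B I HB); auto.
  intros [s0 t|r s0 t] H; [apply HR | apply HS]; exact H.
Qed.

Theorem mainTheorem2 :
  forall (X : form -> Prop) (C : hsent -> Prop),
    (forall A, X A -> pure A) ->
    horn_for X C ->
    forall (Gamma : list form), (forall A, In A Gamma -> pure A) ->
    forall T : tree, is_tableau C Gamma T -> tab_sat C T ->
    forall T' : tree, rule_step C T T' -> tab_sat C T'.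
Proof.
  (* the Horn frame conditions are already built into [lsat] *)
  intros X C _ _ Gamma HGamma T HT [B0 [HB0 Hsat]] T'
    [B [a [s [HB [Ha [Hr Hext]]]]]].
  destruct (classic (B0 = B)) as [-> | Hne].
  - pose proof (tableau_wf_branch C Gamma T HGamma HT B HB) as Hwf.
    destruct (lsat_rule_step C B a s Hsat Hwf Ha Hr) as [N [HN HsatN]].
    exists (B ++ N); split; [eapply extend_branch_new; eauto | exact HsatN].
  - exists B0; split; [eapply extend_branch_old; eauto | exact Hsat].
Qed.
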